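(* Let $G$ be a simple graph, $\mathcal P$ a path-circular collection of $G$, and $p=u_1,u_2,\ldots,u_k$ a path in $\mathcal P$. Write $V(G)=\{u_1,\ldots,u_k,v_{k+1},\ldots,v_r\}$ and $\mathcal A=(N(u_1),\ldots,N(u_k),N(v_{k+1}),\ldots,N(v_r))$, a presentation of $M(\mathcal P)$. Then the path $p$, viewed as a graph with vertices $u_1,\ldots,u_k$ and edges $\{u_i,u_{i+1}\}$, is a minimal $(p,\mathcal A)$-presenting graph, with presenting map $u_i\mapsto i$.
   Context: A path of $G$ is the ordered list of its distinct vertices, consecutive ones adjacent. A path-circular collection $\mathcal P$ of $G$ is a collection of (not necessarily distinct) paths of $G$ such that whenever $w_1,\ldots,w_m$ are the vertices in order of a path in $\mathcal P$ and $i\in\{2,\ldots,m-1\}$: (i) $w_i$ has degree $2$ in $G$, and (ii) every path of $\mathcal P$ containing $w_i$ also contains $w_1$ or $w_m$. For a vertex $v$, $N(v)=\{q\in\mathcal P: v\in q\}$; $M(\mathcal P)$ is the transversal matroid on ground set $\mathcal P$ whose independent sets are the partial transversals of $(N(v))_{v\in V(G)}$. For a transversal matroid $M$ with presentation $\mathcal A=(A_1,\ldots,A_r)$ and $e\in E(M)$, a graph $H$ is $(e,\mathcal A)$-presenting if there is a bijection $\phi:V(H)\to\{i: e\in A_i\}$ such that for all distinct $x,y\in V(H)$ the subgraph induced by $\{z\in V(H): A_{\phi(z)}\subseteq\mathrm{cl}^*_M(A_{\phi(x)}\cup A_{\phi(y)})\}$ is connected ($\mathrm{cl}^*_M$ the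 closure in $M^*$); it is minimal if deleting any one edge gives a graph that is not $(e,\mathcal A)$-presenting. *)

From mathcomp Require Import all_boot.
Set Implicit Arguments. Unset Strict Implicit. Unset Printing Implicit Defensive.

Definition simple_graph (V : finType) (g : rel V) : Prop :=
  symmetric g /\ irreflexive g.

Definition degree (V : finType) (g : rel V) (v : V) : nat := #|[set x | g v x]|.

Definition is_path (V : finType) (g : rel V) (s : seq V) : Prop :=
  s <> [::] /\ uniq s /\ (forall a b, (a, b) \in zip s (behead s) -> g a b).

(* Path-circular collection, indexed by a finite type I (repetitions allowed). *)
Definition path_circular (V I : finType) (g : rel V) (q : I -> seq V) : Prop :=
  forall j, is_path g (q j) /\
   forall x0 : V, forall i, 0 < i < (size (q j)).-1 ->
     let w := nth x0 (q j) i in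
     degree g w = 2 /\
     forall j', w \in q j' ->
       (head x0 (q j) \in q j') || (last x0 (q j) \in q j').

Definition Nb (V I : finType) (q : I -> seq V) (v : V) : {set I} :=
  [set j | v \in q j].

Definition tindep (E J : finType) (A : J -> {set E}) (X : {set E}) : bool :=
  [exists f : {ffun E -> J},
     [forall x in X, x \in A (f x)] &&
     [forall x in X, forall y in X, (f x == f y) ==> (x == y)]].

Definition trank (E J : finType) (A : J -> {set E}) (S : {set E}) : nat :=
  \max_(X : {set E} | (X \subset S) && tindep A X) #|X|.

Definition tdual_rank (E J : finType) (A : J -> {set E}) (S : {set E}) : nat :=
  #|S| + trank A (~: S) - trank A setT.

Definition tdual_cl (E J : finType) (A : J -> {set E}) (S : {set E}) : {set E} :=
  [set x | tdual_rank A (x |: S) == tdual_rank A S].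

Definition induced_connected (W : finType) (h : rel W) (Z : {set W}) : Prop :=
  forall a b, a \in Z -> b \in Z ->
    connect [rel x y | [&& h x y, x \in Z & y \in Z]] a b.

Definition presenting (E J W : finType) (A : J -> {set E}) (e : E)
    (h : rel W) (phi : W -> J) : Prop :=
  injective phi /\ (forall j, (e \in A j) <-> exists w, phi w = j) /\
  forall x y, x != y ->
    induced_connected h
      [set z | A (phi z) \subset tdual_cl A (A (phi x) :|: A (phi y))].

Definition delete_edge (W : finType) (h : rel W) (x y : W) : rel W :=
  [rel a b | h a b && ([set a; b] != [set x; y])].

Definition exists_presenting (E J W : finType) (A : J -> {set E}) (e : E)
    (h : rel W) : Prop := exists phi : W -> J, presenting A e h phi.

Definition minimal_presenting (E J W : finType) (A : J -> {set E}) (e : E)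
    (h : rel W) (phi : W -> J) : Prop :=
  presenting A e h phi /\
  forall x y, h x y -> ~ exists_presenting A e (delete_edge h x y).

Definition path_rel (V : finType) (s : seq V) : rel {x : V | x \in s} :=
  fun a b => ((val a, val b) \in zip s (behead s)) ||
             ((val b, val a) \in zip s (behead s)).
Arguments path_rel [V] s _ _.

From mathcomp Require Import all_boot zify.
Set Implicit Arguments. Unset Strict Implicit. Unset Printing Implicit Defensive.

(* Number the vertices of p = u_0 ... u_(k-1) by position. A path t of the
   collection through an interior vertex u_m also contains an end of p, so if
   i < m < j it must leave the block u_(i+1) ... u_(j-1); these vertices have
   degree 2, so the only exits are u_i and u_j, and t contains one of them.
   Hence N(u_m) is contained in N(u_i) :|: N(u_j), so for every C the vertices
   u with N(u) \subset C form an interval of p, which induces a subpath; the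
   dual closure is only used through S \subset cl*(S). For minimality, a
   presenting graph connects any two of its vertices, whereas deleting an edge
   of a path disconnects its ends. *)

Section ZipBehead.

Variable T : eqType.
Implicit Types (s : seq T) (c d : T).

Lemma mem_zip_behead s c d :
  (c, d) \in zip s (behead s) ->
  exists2 m, m.+1 < size s & (c, d) = (nth c s m, nth d s m.+1).
Proof.
case/(nthP (c, d)) => m m_lt; rewrite nth_zip_cond m_lt /= nth_behead => <-.
by exists m => //; move: m_lt; rewrite size_zip size_behead; lia.
Qed.

Lemma nth_mem_zip_behead s x0 m :
  m.+1 < size s -> (nth x0 s m, nth x0 s m.+1) \in zip s (behead s).
Proof.
move=> m_lt; rewrite -nth_behead.
have -> : (nth x0 s m, nth x0 (behead s) m) = nth (x0, x0) (zip s (behead s)) m.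
  by rewrite nth_zip_cond size_zip size_behead ifT //; lia.
by apply: mem_nth; rewrite size_zip size_behead; lia.
Qed.

Lemma mem_zip_behead2 s c d :
  (c, d) \in zip s (behead s) -> (c \in s) && (d \in s).
Proof.
case/mem_zip_behead => m m_lt [-> ->].
by rewrite !mem_nth //; lia.
Qed.

Lemma index_zip_behead s c d :
  uniq s -> (c, d) \in zip s (behead s) -> index d s = (index c s).+1.
Proof.
move=> s_uniq /mem_zip_behead [m m_lt [-> ->]].
by rewrite !index_uniq // ltnW.
Qed.

Lemma zip_behead_const (P : pred T) s :
  (forall c d, (c, d) \in zip s (behead s) -> P c = P d) ->
  forall x0 a, a \in s -> P a = P (head x0 s).
Proof.
elim: s => [|x s IH] // P_const x0 a.
rewrite in_cons => /predU1P [-> //|a_s] /=.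
case: s IH P_const a_s => [|y s] IH P_const a_s //=.
rewrite (IH _ x0 a a_s); first by apply/esym/P_const; rewrite /= in_cons eqxx.
by move=> c d cd; apply: P_const; rewrite /= in_cons cd orbT.
Qed.

End ZipBehead.

Section PathCrossing.

Variables (V : finType) (g : rel V).
Hypothesis g_sym : symmetric g.

Lemma path_interior_nbhd (s : seq V) x0 m :
  is_path g s -> 0 < m < (size s).-1 -> degree g (nth x0 s m) = 2 ->
  [set v | g (nth x0 s m) v] = [set nth x0 s m.-1; nth x0 s m.+1].
Proof.
move=> [_ [s_uniq s_adj]] m_int deg2.
have m_succ_lt : m.+1 < size s by lia.
have adj_pred : g (nth x0 s m.-1) (nth x0 s m).
  have m_eq : m = m.-1.+1 by lia.
  by rewrite {2}m_eq; apply/s_adj/nth_mem_zip_behead; rewrite -m_eq ltnW.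
have adj_succ : g (nth x0 s m) (nth x0 s m.+1).
  exact/s_adj/nth_mem_zip_behead.
apply/esym/eqP; rewrite eqEcard -[#|[set v | _]|]/(degree g _) deg2.
have m_pred_lt : m.-1 < size s by rewrite (leq_ltn_trans (leq_pred m)) // ltnW.
rewrite cards2 nth_uniq // ltnS lt0b; apply/andP; split; last lia.
by apply/subsetP => v /set2P [->|->]; rewrite inE // g_sym.
Qed.

Lemma path_crossing (s t : seq V) x0 i j a b :
  is_path g s -> (forall c d, (c, d) \in zip t (behead t) -> g c d) ->
  (forall m, i < m < j -> degree g (nth x0 s m) = 2) -> j < size s ->
  a \in t -> b \in t -> i < index a s < j -> ~~ (i < index b s < j) ->
  (nth x0 s i \in t) || (nth x0 s j \in t).
Proof.
move=> s_path t_adj deg2 j_lt a_t b_t a_in b_out.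
have s_uniq := s_path.2.1.
apply/negPn/negP; rewrite negb_or => /andP [i_out j_out].
pose R := [pred v | i < index v s < j].
have R_closed c d : g c d -> R c -> d \in t -> R d.
  rewrite /= => cd c_in d_t; set m := index c s in c_in.
  have m_lt : m < size s by apply: ltn_trans j_lt; case/andP: c_in.
  have m_pred_lt : m.-1 < size s := leq_ltn_trans (leq_pred m) m_lt.
  have m_succ_lt : m.+1 < size s by apply: leq_ltn_trans j_lt; case/andP: c_in.
  have c_eq : c = nth x0 s m by rewrite nth_index // -index_mem.
  have : d \in [set v | g (nth x0 s m) v] by rewrite inE -c_eq.
  have m_int : 0 < m < (size s).-1 by lia.
  rewrite (path_interior_nbhd s_path m_int (deg2 m c_in)).
  case/set2P => d_eq; rewrite d_eq index_uniq // in d_t *.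
  - have : m.-1 != i by apply: contraNneq i_out => <-.
    lia.
  - have : m.+1 != j by apply: contraNneq j_out => <-.
    lia.
have R_const c d : (c, d) \in zip t (behead t) -> R c = R d.
  move=> cd; have /andP [c_t d_t] := mem_zip_behead2 cd.
  apply/idP/idP => [Rc | Rd]; [apply: (R_closed c) | apply: (R_closed d)] => //.
  - exact: t_adj.
  - by rewrite g_sym t_adj.
move: b_out; rewrite -[_ < _ < _]/(R b) (zip_behead_const R_const x0 b_t).
by rewrite -(zip_behead_const R_const x0 a_t) /= a_in.
Qed.

End PathCrossing.

Lemma Nb_between (V I : finType) (g : rel V) (q : I -> seq V) (p : I) x0 i m j :
  symmetric g -> path_circular g q -> i < m < j -> j < size (q p) ->
  Nb q (nth x0 (q p) m) \subset Nb q (nth x0 (q p) i) :|: Nb q (nth x0 (q p) j).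
Proof.
move=> g_sym circ m_in j_lt; have [s_path s_circ] := circ p.
have s_uniq := s_path.2.1.
have deg2 m' : i < m' < j -> degree g (nth x0 (q p) m') = 2.
  by move=> m'_in; apply: (s_circ x0 m' _).1; lia.
apply/subsetP => k; rewrite !inE => m_k.
have m_int : 0 < m < (size (q p)).-1 by lia.
have [_ /(_ k m_k) ends_k] := s_circ x0 m m_int.
have k_adj := (circ k).1.2.2.
have m_lt : m < size (q p) by lia.
have last_lt : (size (q p)).-1 < size (q p) by lia.
have m_idx : i < index (nth x0 (q p) m) (q p) < j by rewrite index_uniq.
case/orP: ends_k => end_k;
  apply: (path_crossing g_sym s_path k_adj deg2 j_lt m_k end_k m_idx).
- by rewrite -nth0 index_uniq // (leq_ltn_trans _ m_lt).
- by rewrite -nth_last index_uniq //; lia.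
Qed.

Section PathGraph.

Variables (V : finType) (s : seq V).
Hypothesis s_uniq : uniq s.
Local Notation W := {x : V | x \in s}.
Local Notation idx w := (index (val w) s).

Lemma idx_lt (w : W) : idx w < size s.
Proof. by rewrite index_mem; apply: valP. Qed.

Lemma idx_inj : injective (fun w : W => idx w).
Proof.
move=> u v uv; apply: val_inj.
by rewrite -(nth_index (val u) (valP u)) -(nth_index (val u) (valP v)) uv.
Qed.

Lemma path_rel_index (u v : W) :
  path_rel s u v -> idx v = (idx u).+1 \/ idx u = (idx v).+1.
Proof. by case/orP => /(index_zip_behead s_uniq) ->; [left | right]. Qed.

Lemma path_rel_sym : symmetric (path_rel s).
Proof. by move=> u v; rewrite /path_rel orbC. Qed.

Lemma path_rel_irrefl : irreflexive (path_rel s).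
Proof. by move=> u; apply/negP => /path_rel_index; lia. Qed.

Lemma induced_connected_interval (Z : {set W}) :
  (forall a b c : W, a \in Z -> b \in Z -> idx a < idx c < idx b -> c \in Z) ->
  induced_connected (path_rel s) Z.
Proof.
move=> Z_interval.
set e := [rel x y | [&& path_rel s x y, x \in Z & y \in Z]].
have e_sym : symmetric e.
  by move=> u v; rewrite /= path_rel_sym [(u \in Z) && _]andbC.
suff conn_le (a b : W) : a \in Z -> b \in Z -> idx a <= idx b -> connect e a b.
  move=> a b aZ bZ; case: (leqP (idx a) (idx b)) => [|/ltnW] ab.
    exact: conn_le.
  by rewrite (sym_connect_sym e_sym) conn_le.
move=> aZ bZ le_ab.
have b_lt := idx_lt b.
pose w m : W := insubd a (nth (val a) s m).
have val_w m : m < size s -> val (w m) = nth (val a) s m.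
  by move=> m_lt; rewrite val_insubd mem_nth.
have idx_w m : m < size s -> idx (w m) = m.
  by move=> m_lt; rewrite val_w // index_uniq.
have w_idx (c : W) : w (idx c) = c.
  by apply: val_inj; rewrite val_w ?idx_lt // nth_index //; apply: valP.
have wZ m : idx a <= m <= idx b -> w m \in Z.
  move=> /andP [am mb]; have m_lt := leq_ltn_trans mb b_lt.
  case: (eqVneq m (idx a)) => [->|m_ne_a]; first by rewrite w_idx.
  case: (eqVneq m (idx b)) => [->|m_ne_b]; first by rewrite w_idx.
  by apply: (Z_interval a b); rewrite // idx_w //; lia.
have w_adj m : m.+1 < size s -> path_rel s (w m) (w m.+1).
  by move=> m_lt; rewrite /path_rel !val_w ?nth_mem_zip_behead // ltnW.
suff conn_a n : idx a + n <= idx b -> connect e a (w (idx a + n)).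
  by rewrite -(w_idx b) -(subnKC le_ab) conn_a ?subnKC.
elim: n => [|n IHn]; first by rewrite addn0 w_idx connect0.
rewrite addnS => n_lt; apply: connect_trans (IHn (ltnW n_lt)) (connect1 _).
apply/and3P; split; first exact: w_adj (leq_ltn_trans n_lt b_lt).
all: by apply: wZ; lia.
Qed.

Lemma path_rel_edge_eq (x y u v : W) :
  path_rel s x y -> path_rel s u v ->
  minn (idx u) (idx v) = minn (idx x) (idx y) -> [set u; v] = [set x; y].
Proof.
move=> xy uv; wlog uv_succ : u v uv / idx v = (idx u).+1.
  move=> wlog_uv; case: (path_rel_index uv) => [|vu]; first exact: wlog_uv.
  by rewrite minnC setUC; apply: wlog_uv; rewrite // path_rel_sym.
wlog xy_succ : x y xy / idx y = (idx x).+1.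
  move=> wlog_xy; case: (path_rel_index xy) => [|yx]; first exact: wlog_xy.
  rewrite [minn (idx x) _]minnC [[set x; y]]setUC.
  by apply: wlog_xy; rewrite // path_rel_sym.
move=> min_eq; have ux : idx u = idx x by lia.
have vy : idx v = idx y by lia.
by rewrite (idx_inj ux) (idx_inj vy).
Qed.

Lemma path_edge_disconnected (x y : W) :
  path_rel s x y -> ~~ connect (delete_edge (path_rel s) x y) x y.
Proof.
move=> xy.
have cut : closed (delete_edge (path_rel s) x y)
                  [pred w : W | idx w <= minn (idx x) (idx y)].
  move=> u v /andP [uv uv_ne].
  case: (eqVneq (minn (idx u) (idx v)) (minn (idx x) (idx y)))
    => [min_eq | min_ne].
    by rewrite (path_rel_edge_eq xy uv min_eq) eqxx in uv_ne.
  rewrite !inE; move: (path_rel_index uv) min_ne.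
  move: (idx u) (idx v) (idx x) (idx y) => iu iv ix iy succ min_ne.
  by apply/idP/idP; lia.
apply/negP => /(closed_connect cut); rewrite !inE; move: (path_rel_index xy).
move: (idx x) (idx y) => ix iy [] ->.
- by rewrite (minn_idPl (leqnSn _)) leqnn ltnn.
- by rewrite (minn_idPr (leqnSn _)) leqnn ltnn.
Qed.

End PathGraph.

Lemma subset_tdual_cl (E J : finType) (A : J -> {set E}) (S : {set E}) :
  S \subset tdual_cl A S.
Proof. by apply/subsetP => x xS; rewrite inE (setUidPr _) // sub1set. Qed.

Lemma presenting_connect (E J W : finType) (A : J -> {set E}) e (h : rel W)
    phi x y :
  presenting A e h phi -> x != y -> connect h x y.
Proof.
move=> [_ [_ induced_conn]] xy.
have cl_xy := subset_tdual_cl A (A (phi x) :|: A (phi y)).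
apply: connect_sub (induced_conn x y xy x y _ _) => [u v /and3P [uv _ _]||].
- exact: connect1.
- by rewrite inE (subset_trans (subsetUl _ _) cl_xy).
- by rewrite inE (subset_trans (subsetUr _ _) cl_xy).
Qed.

Lemma path_circular_induced_connected (V I : finType) (g : rel V)
    (q : I -> seq V) (p : I) (C : {set I}) :
  symmetric g -> path_circular g q ->
  induced_connected (path_rel (q p)) [set z | Nb q (val z) \subset C].
Proof.
move=> g_sym circ; apply: induced_connected_interval (circ p).1.2.1 _ _.
move=> a b c; rewrite !inE => aC bC c_in.
have := Nb_between (val c) g_sym circ c_in (idx_lt b).
rewrite !nth_index; try exact: valP.
by move/subset_trans; apply; rewrite subUset aC.
Qed.

Theorem lemma4p2 (V I : finType) (g : rel V) (q : I -> seq V) (p : I) :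
  simple_graph g -> path_circular g q ->
  minimal_presenting (fun v : V => Nb q v) p (path_rel (q p))
    (fun w : {x : V | x \in q p} => val w).
Proof.
move=> [g_sym _] circ; have p_uniq := (circ p).1.2.1.
have presents : presenting (fun v : V => Nb q v) p (path_rel (q p))
                  (fun w : {x : V | x \in q p} => val w).
  split; first exact: val_inj.
  split=> [v | x y _]; last exact: path_circular_induced_connected.
  rewrite inE; split=> [v_p | [w <-]]; last exact: valP.
  by exists (exist _ v v_p).
split=> // x y xy [phi /presenting_connect conn_xy].
have x_ne_y : x != y by apply: contraTneq xy => ->; rewrite path_rel_irrefl.
by move: (path_edge_disconnected p_uniq xy); rewrite conn_xy.
Qed.
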